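(* Let $N\ge 1$, $\sigma\in(0,1)$, $c>0$ and $q\in(1-\sigma,1)$. Then the client-server mechanism with parameters $(\sigma,c,q)$ is $\epsilon$-differentially private with $\epsilon=\frac{q}{c(q+\sigma-1)}$. That is, for every $\delta\ge 0$, every pair of $\delta$-adjacent initial states $\theta(0),\theta'(0)\in\mathbb{R}^N$, and every measurable set $\mathit{Obs}$ of observation sequences, $$\Pr\big[(x(t),y(t))_{t\ge0}\in \mathit{Obs}\mid \theta(0)\big]\le e^{\epsilon\delta}\,\Pr\big[(x(t),y(t))_{t\ge0}\in \mathit{Obs}\mid \theta'(0)\big].$$
   Context: $Lap(b)$ denotes the Laplace distribution on $\mathbb{R}$ with density $p_L(x\mid b)=\frac{1}{2b}e^{-|x|/b}$. Client-server mechanism with parameters $\sigma\in(0,1)$, $c>0$, $q\in(0,1)$: there are $N$ clients with real initial states $\theta_1(0),\dots,\theta_N(0)$ and one server. At each round $t=0,1,2,\dots$: (i) each client $i$ sends $x_i(t)=\theta_i(t)+\eta_i(t)$ to the server, where the $\eta_i(t)$ ($i\in[N]$, $t\ge0$) are mutually independent with $\eta_i(t)\sim Lap(cq^t)$; (ii) the server sets its state $y(t)=\frac1N\sum_{i=1}^N x_i(t)$; (iii) the server sends $y(t)$ to all clients; (iv) each client updates $\theta_i(t+1)=(1-\sigma)\theta_i(t)+\sigma y(t)$. The adversary observes the sequence $(x(t),y(t))_{t\ge0}$ (all messages and the server's state). Two vectors $\theta,\theta'\in\mathbb{R}^N$ are $\delta$-adjacent ($\delta\ge0$) if there is one index $i$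 with $|\theta_i-\theta'_i|\le\delta$ and $\theta_j=\theta'_j$ for all $j\ne i$. *)

From HB Require Import structures.
From mathcomp Require Import all_boot all_order all_algebra.
From mathcomp Require Import all_classical all_reals all_analysis.
Set Implicit Arguments. Unset Strict Implicit. Unset Printing Implicit Defensive.
Import Order.TTheory GRing.Theory Num.Theory.
Import numFieldNormedType.Exports.
Local Open Scope classical_set_scope.
Local Open Scope ring_scope.

Definition laplace_pdf {R : realType} (b : R) (x : R) : R :=
  (2 * b)^-1 * expR (- `|x| / b).

Definition has_laplace_law {R : realType} {d : measure_display}
  {T : measurableType d} (P : probability T R) (b : R) (X : T -> R) : Prop :=
  forall B : set R, measurable B ->
    P (X @^-1` B) = (\int[@lebesgue_measure R]_(x in B) (laplace_pdf b x)%:E)%E.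

Definition mutually_independent {R : realType} {d : measure_display}
  {T : measurableType d} (P : probability T R) {I : eqType}
  (X : I -> T -> R) : Prop :=
  forall (s : seq I) (B : I -> set R), uniq s ->
    (forall j, measurable (B j)) ->
    P (\bigcap_(j in [set` s]) (X j @^-1` B j)) =
    (\prod_(j <- s) P (X j @^-1` B j))%E.

Section Mechanism.
Context {R : realType} (N : nat) (sigma : R).

(* Client states theta(t), given the initial state th0 and a realization
   e i t of the noises eta_i(t). *)
Fixpoint client_state (th0 : 'I_N -> R) (e : 'I_N -> nat -> R) (t : nat)
  : 'I_N -> R :=
  match t with
  | 0 => th0
  | t'.+1 =>
      let th := client_state th0 e t' in
      let y := (N%:R)^-1 * \sum_(j < N) (th j + e j t') in
      fun i => (1 - sigma) * th i + sigma * y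
  end.

Definition client_msg (th0 : 'I_N -> R) (e : 'I_N -> nat -> R) (t : nat)
  : 'I_N -> R := fun i => client_state th0 e t i + e i t.

Definition server_state (th0 : 'I_N -> R) (e : 'I_N -> nat -> R) (t : nat)
  : R := (N%:R)^-1 * \sum_(i < N) client_msg th0 e t i.

Definition observation (th0 : 'I_N -> R) (e : 'I_N -> nat -> R)
  : nat -> ('I_N -> R) * R :=
  fun t => (client_msg th0 e t, server_state th0 e t).

End Mechanism.

Definition obs_cylinders {R : realType} (N : nat)
  : set (set (nat -> ('I_N -> R) * R)) :=
  [set A | exists t (B : set R), measurable B /\
     ((exists i : 'I_N, A = [set w | (w t).1 i \in B]) \/
      A = [set w | (w t).2 \in B])].

Definition obs_measurable {R : realType} (N : nat)
  (Obs : set (nat -> ('I_N -> R) * R)) : Prop :=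
  <<s (@obs_cylinders R N) >> Obs.

Definition delta_adjacent {R : realType} (N : nat) (delta : R)
  (th th' : 'I_N -> R) : Prop :=
  exists i : 'I_N, `|th i - th' i| <= delta /\
    (forall j : 'I_N, j != i -> th j = th' j).

From HB Require Import structures.
From mathcomp Require Import all_boot all_order all_algebra.
From mathcomp Require Import all_classical all_reals all_analysis.
From mathcomp Require Import measurable_realfun ring lra.
Import Order.TTheory GRing.Theory Num.Theory.
Import numFieldNormedType.Exports.
Local Open Scope classical_set_scope.
Local Open Scope ring_scope.

(* Coupling argument.  If client [i0], the only coordinate where [th] and
   [th'] differ, adds [(1 - sigma)^t (th i0 - th' i0)] to its noise at round
   [t], the run started from [th'] produces exactly the observations of the
   unshifted run started from [th].  Shifting a Laplace variable of scale
   [c q^t] by [s] changes its density by a factor at most [exp (|s| / (c q^t))],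
   so by independence the probability of a cylinder event in the noises changes
   by at most the product of these factors: the exponential of a geometric
   series of ratio [(1 - sigma) / q < 1], summing to at most
   [q delta / (c (q + sigma - 1))].  A monotone class argument extends the
   bound from cylinders to all measurable events. *)

Section lebesgue_translation.
Context {R : realType}.
Local Open Scope ereal_scope.
Local Notation mu := (@lebesgue_measure R).

Definition shiftR (s : R) : measurableTypeR R -> measurableTypeR R :=
  fun x => (x + s)%R.

Lemma measurable_shiftR (s : R) : measurable_fun setT (shiftR s).
Proof. exact: measurable_funD. Qed.

HB.instance Definition _ s :=
  isMeasurableFun.Build _ _ _ _ (shiftR s) (measurable_shiftR s).

Lemma measurable_shift_preimage (s : R) (B : set R) : measurable B ->
  measurable [set x : R | B (x + s)%R].
Proof. by move=> mB; rewrite -[X in measurable X]setTI; exact: measurable_shiftR. Qed.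

Lemma lebesgue_measure_shift (s : R) (A : set R) : measurable A ->
  pushforward mu (shiftR s) A = mu A.
Proof.
move=> mA; apply/esym/lebesgue_measure_unique => //= _ [[a b]] _ <-.
rewrite /pushforward.
have -> : shiftR s @^-1` `]a, b] = `](a - s)%R, (b - s)%R]%classic.
  apply/seteqP; split => x /=; rewrite /shiftR !in_itv /= => /andP [h1 h2].
  - by rewrite ltrBlDr h1 lerBrDr h2.
  - by rewrite -ltrBlDr h1 -lerBrDr h2.
rewrite !lebesgue_measure_itv /= !lte_fin ltrD2r.
by case: ifP => // _; rewrite -EFinD; congr EFin; ring.
Qed.

Lemma ge0_integral_shift (s : R) (B : set R) (f : R -> \bar R) :
  measurable B -> measurable_fun setT f -> (forall x, 0 <= f x) ->
  \int[mu]_(x in B) f x = \int[mu]_(x in [set x | B (x + s)%R]) f (x + s)%R.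
Proof.
move=> mB mf f0.
rewrite -(_ : shiftR s @^-1` B = [set x | B (x + s)%R]) //.
rewrite -(ge0_integral_pushforward (measurable_shiftR s) mu mB); last 2 first.
- exact: measurable_funS mf.
- by move=> *; exact: f0.
by apply: eq_measure_integral => //= A mA _; exact/esym/lebesgue_measure_shift.
Qed.

End lebesgue_translation.

Section laplace.
Context {R : realType}.
Local Open Scope ereal_scope.

Lemma measurable_laplace_pdf (b : R) : measurable_fun setT (laplace_pdf b).
Proof.
apply: measurable_funM => //; apply: measurableT_comp; first exact: measurable_expR.
by apply: measurable_funM => //; exact: measurableT_comp.
Qed.

Lemma laplace_pdf_ge0 (b x : R) : (0 < b)%R -> (0 <= laplace_pdf b x)%R.
Proof. by move=> b0; rewrite mulr_ge0 ?expR_ge0 // invr_ge0 mulr_ge0 // ltW. Qed.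

Lemma laplace_pdf_shift_le (b s x : R) : (0 < b)%R ->
  (laplace_pdf b x <= expR (`|s| / b) * laplace_pdf b (x + s))%R.
Proof.
move=> b0; rewrite /laplace_pdf mulrCA; apply: ler_wpM2l.
  by rewrite invr_ge0 mulr_ge0 // ltW.
rewrite -expRD ler_expR -mulrDl; apply: ler_wpM2r; first by rewrite invr_ge0 ltW.
by have := ler_normD x s; lra.
Qed.

Lemma laplace_law_shift_le d (T : measurableType d) (P : probability T R)
    (b s : R) (X : T -> R) (B : set R) :
  (0 < b)%R -> has_laplace_law P b X -> measurable B ->
  P (X @^-1` [set x | B (x + s)%R]) <= (expR (`|s| / b))%:E * P (X @^-1` B).
Proof.
move=> b0 lawX mB.
have pdf_ge0 x : 0 <= (laplace_pdf b x)%:E by rewrite lee_fin laplace_pdf_ge0.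
have mpdf : measurable_fun setT (fun x => (laplace_pdf b x)%:E).
  by apply/measurable_EFinP; exact: measurable_laplace_pdf.
have mpdf_shift : measurable_fun setT (fun x : R => (laplace_pdf b (x + s))%:E).
  apply/measurable_EFinP; apply: measurableT_comp; first exact: measurable_laplace_pdf.
  exact: measurable_shiftR.
rewrite (lawX _ (measurable_shift_preimage s _ mB)) (lawX _ mB).
rewrite (ge0_integral_shift s _ _ mB mpdf pdf_ge0).
rewrite -ge0_integralZl_EFin //; last 2 first.
- exact: measurable_shift_preimage.
- exact: measurable_funTS.
apply: ge0_le_integral => //.
- exact: measurable_shift_preimage.
- exact: measurable_funTS.
- by apply: measurable_funeM; exact: measurable_funTS.
- by move=> x _; rewrite lee_fin laplace_pdf_shift_le.
Qed.

End laplace.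

Section cylinders.
Context {d : measure_display} {V : measurableType d} {I : eqType} (j0 : I).

Definition cylinder (u : seq I) (H : I -> set V) : set (I -> V) :=
  [set f | forall j, j \in u -> H j (f j)].

Definition cylinders : set (set (I -> V)) :=
  [set A | exists u H, (forall j, measurable (H j)) /\ A = cylinder u H].

Definition widen_base (u : seq I) (H : I -> set V) : I -> set V :=
  fun j => if j \in u then H j else setT.

Lemma cylinder_widen (u v : seq I) (H : I -> set V) : {subset u <= v} ->
  cylinder u H = cylinder v (widen_base u H).
Proof.
move=> uv; apply/seteqP; split => f /= Hf j jv.
  by rewrite /widen_base; case: ifP => // ju; exact: Hf.
by move: (Hf j (uv _ jv)); rewrite /widen_base jv.
Qed.

Lemma measurable_widen_base (u : seq I) (H : I -> set V) :
  (forall j, measurable (H j)) -> forall j, measurable (widen_base u H j).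
Proof. by move=> mH j; rewrite /widen_base; case: ifP. Qed.

Lemma cylinders_setT : cylinders setT.
Proof. by exists [::], (fun _ => setT); split => //; apply/seteqP; split. Qed.

Lemma cylinders0 : cylinders set0.
Proof.
exists [:: j0], (fun _ => set0); split => //.
by apply/seteqP; split => // f /= /(_ j0); rewrite mem_seq1 eqxx => /(_ erefl).
Qed.

Lemma cylindersI : setI_closed cylinders.
Proof.
move=> _ _ [u [H [mH ->]]] [u' [H' [mH' ->]]].
exists (u ++ u'), (fun j => widen_base u H j `&` widen_base u' H' j); split.
  by move=> j; apply: measurableI; exact: measurable_widen_base.
rewrite (@cylinder_widen u (u ++ u')); last by move=> j ju; rewrite mem_cat ju.
rewrite (@cylinder_widen u' (u ++ u')); last by move=> j ju; rewrite mem_cat ju orbT.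
apply/seteqP; split => f /=.
  by move=> [Hf Hf'] j jv; split; [exact: Hf|exact: Hf'].
by move=> Hf; split => j jv; have [] := Hf j jv.
Qed.

Section cylinder_difference.
Variables (v : seq I) (HA HB : I -> set V).
Hypothesis v_uniq : uniq v.

(* On the [k]-th piece, [v`_k] is the first coordinate along [v] where [HB]
   fails. *)
Definition diff_piece (k : nat) : I -> set V := fun j =>
  if (index j v < k)%N then HA j `&` HB j
  else if index j v == k then HA j `\` HB j else HA j.

Lemma cylinderD_pieces : cylinder v HA `\` cylinder v HB =
  \bigcup_(X in [set cylinder v (diff_piece k) | k in `I_(size v)]) X.
Proof.
apply/seteqP; split => f.
  move=> [fA /= fB].
  pose p := fun j : I => ~~ `[< HB j (f j) >].
  have hp : has p v.
    apply/negPn/negP => /hasPn hn; apply: fB => j jv.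
    by have := hn j jv; rewrite /p negbK => /asboolP.
  exists (cylinder v (diff_piece (find p v))).
    by exists (find p v) => //=; rewrite -has_find.
  move=> j jv; rewrite /diff_piece; have fAj := fA j jv.
  case: ltnP => jk.
    split => //; have := before_find j0 jk; rewrite nth_index // /p => /negbFE.
    by move/asboolP.
  case: eqP => jk' //; split => //.
  by have := nth_find j0 hp; rewrite -jk' nth_index // /p => /asboolP.
move=> [X [k /= kv <-]] fX; split.
  move=> j jv; have := fX j jv; rewrite /diff_piece.
  by case: ifP => [_ []|_] //; case: ifP => [_ []|_].
move=> fB; have vk : nth j0 v k \in v by rewrite mem_nth.
have := fX _ vk; rewrite /diff_piece index_uniq // ltnn eqxx => -[_]; apply.
exact: fB.
Qed.

Lemma trivIset_diff_pieces :
  trivIset [set cylinder v (diff_piece k) | k in `I_(size v)] id.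
Proof.
suff disj k l : (k < l)%N -> (k < size v)%N ->
    cylinder v (diff_piece k) `&` cylinder v (diff_piece l) = set0.
  move=> _ _ [k /= kv <-] [l /= lv <-] [f [fk fl]].
  case: (ltngtP k l) => [kl|lk|-> //].
    by move: (disj k l kl kv); move/seteqP => [/(_ f (conj fk fl))].
  by move: (disj l k lk lv); move/seteqP => [/(_ f (conj fl fk))].
move=> kl kv; apply/seteqP; split => // f [fk fl].
have vk : nth j0 v k \in v by rewrite mem_nth.
have := fk _ vk; have := fl _ vk.
by rewrite /diff_piece index_uniq // kl ltnn eqxx => -[_ ?] [_]; apply.
Qed.

End cylinder_difference.

Lemma cylindersD : semi_setD_closed cylinders.
Proof.
move=> _ _ [u [H [mH ->]]] [u' [H' [mH' ->]]].
pose v := undup (u ++ u').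
rewrite (@cylinder_widen u v); last by move=> j ju; rewrite mem_undup mem_cat ju.
rewrite (@cylinder_widen u' v); last by move=> j ju; rewrite mem_undup mem_cat ju orbT.
set HA := widen_base u H; set HB := widen_base u' H'.
exists [set cylinder v (diff_piece v HA HB k) | k in `I_(size v)]; split.
- exact/finite_image/finite_II.
- move=> _ [k _ <-]; exists v, (diff_piece v HA HB k); split => // j.
  have mA := measurable_widen_base u H mH j; have mB := measurable_widen_base u' H' mH' j.
  rewrite /diff_piece; case: ifP => _; first exact: measurableI.
  by case: ifP => _ //; exact: measurableD.
- exact/cylinderD_pieces/undup_uniq.
- exact/trivIset_diff_pieces/undup_uniq.
Qed.

Definition cylinder_space : Type := I -> V.
HB.instance Definition _ := Pointed.on cylinder_space.
HB.instance Definition _ := @isSemiRingOfSets.Build (sigma_display cylinders)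
  cylinder_space cylinders cylinders0 cylindersI cylindersD.

Lemma setring_cylinders_decomp (A : set (I -> V)) : <<r cylinders >> A ->
  exists B : set (set (I -> V)), [/\ finite_set B, trivIset B id,
    B `<=` cylinders & A = \bigcup_(X in B) X].
Proof.
move=> /(@SetRing.ring_finite_set _ cylinder_space) [B [fB _ tB mB ->]].
by exists B; split => // X BX; apply: mB; rewrite inE.
Qed.

End cylinders.

Lemma prode_le_scaled {R : realType} (J : Type) (s : seq J)
    (f g : J -> \bar R) (a : J -> R) :
  (forall j, (0 <= f j)%E) -> (forall j, (0 <= g j)%E) -> (forall j, 0 <= a j) ->
  (forall j, (f j <= (a j)%:E * g j)%E) ->
  (\prod_(j <- s) f j <= (\prod_(j <- s) a j)%:E * \prod_(j <- s) g j)%E.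
Proof.
move=> f0 g0 a0 fg; elim: s => [|x s IH]; first by rewrite !big_nil mul1e.
by rewrite !big_cons EFinM muleACA; apply: lee_pmul => //; exact: prode_ge0.
Qed.

Section laplace_shift_domination.
Context {R : realType} {d : measure_display} {T : measurableType d}
  (P : probability T R) {I : eqType} (X : I -> T -> R) (b s : I -> R) (K : R).
Hypothesis b_gt0 : forall j, 0 < b j.
Hypothesis mX : forall j, measurable_fun setT (X j).
Hypothesis X_indep : mutually_independent P X.
Hypothesis X_laplace : forall j, has_laplace_law P (b j) (X j).
Hypothesis shift_cost_le :
  forall u : seq I, uniq u -> expR (\sum_(j <- u) `|s j| / b j) <= K.

Definition noise_event (A : set (I -> R)) : set T := (fun w j => X j w) @^-1` A.

Definition shifted_noise_event (A : set (I -> R)) : set T :=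
  (fun w j => X j w + s j) @^-1` A.

Definition shift_dominated : set (set (I -> R)) :=
  [set A | [/\ measurable (noise_event A), measurable (shifted_noise_event A) &
    (P (shifted_noise_event A) <= K%:E * P (noise_event A))%E]].

Lemma noise_event_cylinder (u : seq I) (H : I -> set R) :
  noise_event (cylinder u H) = \bigcap_(j in [set` undup u]) (X j @^-1` H j).
Proof.
apply/seteqP; split => w /= Hw j /=; first by rewrite mem_undup; exact: Hw.
by move=> ju; apply: (Hw j) => /=; rewrite mem_undup.
Qed.

Lemma shifted_noise_event_cylinder (u : seq I) (H : I -> set R) :
  shifted_noise_event (cylinder u H) =
  \bigcap_(j in [set` undup u]) (X j @^-1` [set x | H j (x + s j)]).
Proof.
apply/seteqP; split => w /= Hw j /=; first by rewrite mem_undup; exact: Hw.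
by move=> ju; apply: (Hw j) => /=; rewrite mem_undup.
Qed.

Lemma cylinder_shift_dominated : cylinders `<=` shift_dominated.
Proof.
have mXpre j B : measurable B -> measurable (X j @^-1` B).
  by move=> mB; rewrite -[X in measurable X]setTI; exact: mX.
move=> _ [u [H [mH ->]]].
have mHs j : measurable [set x | H j (x + s j)] by exact: measurable_shift_preimage.
rewrite /shift_dominated /= noise_event_cylinder shifted_noise_event_cylinder.
split; [apply: fin_bigcap_measurable => [|j _]; [exact: finite_seq|exact: mXpre]..|].
rewrite !X_indep ?undup_uniq //.
apply: le_trans.
  apply: (@prode_le_scaled _ _ _ _ (fun j => P (X j @^-1` H j))
    (fun j => expR (`|s j| / b j))) => // j.
  exact: laplace_law_shift_le.
rewrite -expR_sum; apply: lee_wpmul2r; first exact: prode_ge0.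
by rewrite lee_fin shift_cost_le ?undup_uniq.
Qed.

Lemma shift_dominated_bigcup (F : (set (I -> R))^nat) :
  nondecreasing_seq F -> (forall n, shift_dominated (F n)) ->
  shift_dominated (\bigcup_n F n).
Proof.
move=> ndF domF; have [mF msF leF] := all_and3 domF.
have cvgP (f : T -> I -> R) : (forall n, measurable (f @^-1` F n)) ->
    P \o (fun n => f @^-1` F n) @ \oo --> P (f @^-1` \bigcup_n F n).
  move=> mfF; rewrite preimage_bigcup.
  apply: nondecreasing_cvg_mu => //; first exact: bigcup_measurable.
  by move=> n m nm; apply/subsetPset => w; move/subsetPset: (ndF n m nm); apply.
split; rewrite /noise_event /shifted_noise_event ?preimage_bigcup.
- exact: bigcup_measurable.
- exact: bigcup_measurable.
apply: lee_cvg_to (cvgP _ msF) (cvgeZl _ (cvgP _ mF)) _ => //.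
exact: nearW.
Qed.

Lemma shift_dominated_bigcap (F : (set (I -> R))^nat) :
  nonincreasing_seq F -> (forall n, shift_dominated (F n)) ->
  shift_dominated (\bigcap_n F n).
Proof.
move=> niF domF; have [mF msF leF] := all_and3 domF.
have cvgP (f : T -> I -> R) : (forall n, measurable (f @^-1` F n)) ->
    P \o (fun n => f @^-1` F n) @ \oo --> P (f @^-1` \bigcap_n F n).
  move=> mfF; rewrite preimage_bigcap.
  apply: nonincreasing_cvg_mu => //.
  - exact: le_lt_trans (probability_le1 P (mfF 0%N)) (ltey _).
  - exact: bigcapT_measurable.
  by move=> n m nm; apply/subsetPset => w; move/subsetPset: (niF n m nm); apply.
split; rewrite /noise_event /shifted_noise_event ?preimage_bigcap.
- exact: bigcapT_measurable.
- exact: bigcapT_measurable.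
apply: lee_cvg_to (cvgP _ msF) (cvgeZl _ (cvgP _ mF)) _ => //.
exact: nearW.
Qed.

Lemma setring_shift_dominated (j0 : I) : <<r cylinders >> `<=` shift_dominated.
Proof.
move=> _ /(setring_cylinders_decomp j0) [B [fB tB Bcyl ->]].
have domB C : B C -> shift_dominated C by move/Bcyl/cylinder_shift_dominated.
have trivIset_preimage (f : T -> I -> R) : trivIset B (fun C => f @^-1` C).
  by move=> C C' BC BC' [w [Cw C'w]]; apply: tB => //; exists (f w).
split; rewrite /noise_event /shifted_noise_event preimage_bigcup.
- by apply: fin_bigcup_measurable => // C /domB [].
- by apply: fin_bigcup_measurable => // C /domB [].
rewrite !measure_fin_bigcup //.
- by rewrite ge0_mule_fsumr //; apply: lee_fsum => // C /domB [].
- exact: trivIset_preimage.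
- by move=> C /domB [].
- by move=> C /domB [].
Qed.

Lemma sigma_shift_dominated (j0 : I) : <<s cylinders >> `<=` shift_dominated.
Proof.
have [sr0 srD srU] := smallest_sigma_ring <<r @cylinders _ R I >>.
have sigma_ring_sub : <<sr <<r cylinders >> >> `<=` shift_dominated.
  apply: monotone_setring_sub_g_sigma_ring (smallest_setring _) _.
    by split; [exact: shift_dominated_bigcup|exact: shift_dominated_bigcap].
  exact: setring_shift_dominated.
apply: subset_trans sigma_ring_sub; apply: smallest_sub; last first.
  by move=> A cA; apply: sub_g_sigma_ring; exact: sub_setring.
split => [|A sA|F sF]; [exact: sr0| |exact: srU].
apply: srD => //; apply: sub_g_sigma_ring; apply: sub_setring.
exact: cylinders_setT.
Qed.

End laplace_shift_domination.

Section coupling.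
Context {R : realType} {N : nat} (sigma : R) (th th' : 'I_N -> R) (i0 : 'I_N).
Hypothesis th_eq : forall j, j != i0 -> th j = th' j.

Definition coupling_shift (i : 'I_N) (t : nat) : R :=
  if i == i0 then (1 - sigma) ^+ t * (th i0 - th' i0) else 0.

Lemma client_state_coupling (e : 'I_N -> nat -> R) t j :
  client_state sigma th e t j =
  client_state sigma th' (fun i t => e i t + coupling_shift i t) t j
  + coupling_shift j t.
Proof.
elim: t j => [|t IH] j /=.
  rewrite /coupling_shift; case: eqP => [->|/eqP ne]; last by rewrite th_eq // addr0.
  by rewrite expr0 mul1r; ring.
rewrite IH; under eq_bigr do rewrite IH.
have -> : coupling_shift j t.+1 = (1 - sigma) * coupling_shift j t.
  by rewrite /coupling_shift exprS; case: (j == i0); ring.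
rewrite (eq_bigr (fun i => client_state sigma th'
  (fun i t => e i t + coupling_shift i t) t i + (e i t + coupling_shift i t))).
  by ring.
by move=> i _; ring.
Qed.

Lemma observation_coupling (e : 'I_N -> nat -> R) :
  observation sigma th e =
  observation sigma th' (fun i t => e i t + coupling_shift i t).
Proof.
have msg_eq t : client_msg sigma th e t =
    client_msg sigma th' (fun i t => e i t + coupling_shift i t) t.
  by apply: funext => i; rewrite /client_msg client_state_coupling; ring.
by apply: funext => t; rewrite /observation /server_state msg_eq.
Qed.

End coupling.

Lemma sumr_uniq_sub_le {R : numDomainType} (I : eqType) (s s' : seq I)
    (g : I -> R) :
  (forall i, 0 <= g i) -> uniq s -> uniq s' -> {subset s <= s'} ->
  \sum_(i <- s) g i <= \sum_(i <- s') g i.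
Proof.
move=> g0 us us' ss'; rewrite [leRHS](bigID (fun i => i \in s)) /=.
have -> : \sum_(i <- s' | i \in s) g i = \sum_(i <- s) g i.
  rewrite -big_filter; apply: perm_big; apply: uniq_perm => //.
  - exact: filter_uniq.
  - by move=> i; rewrite mem_filter andb_idr // => /ss'.
by rewrite lerDl sumr_ge0.
Qed.

Lemma sumr_geometric_uniq_le {R : realType} (a r : R) (s : seq nat) :
  0 <= a -> 0 < r < 1 -> uniq s -> \sum_(t <- s) a * r ^+ t <= a / (1 - r).
Proof.
move=> a0 /andP [r0 r1] us.
pose n := (\max_(t <- s) t).+1.
have s_sub : {subset s <= iota 0 n}.
  by move=> t ts; rewrite mem_iota /= ltnS; exact: leq_bigmax_seq.
apply: le_trans (@sumr_uniq_sub_le _ _ s (iota 0 n) (fun t => a * r ^+ t) _ us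
  (iota_uniq 0 n) s_sub) _.
  by move=> t; rewrite mulr_ge0 // exprn_ge0 // ltW.
have := @geometric_le_lim _ n a r a0 r0; rewrite gtr0_norm // => /(_ r1).
by rewrite /series /= /index_iota subn0.
Qed.

Lemma coupling_cost_le {R : realType} (N : nat) (sigma c q delta : R)
    (th th' : 'I_N -> R) (i0 : 'I_N) (u : seq ('I_N * nat)) :
  0 < sigma < 1 -> 0 < c -> 1 - sigma < q < 1 ->
  `|th i0 - th' i0| <= delta -> uniq u ->
  \sum_(j <- u) `|coupling_shift sigma th th' i0 j.1 j.2| / (c * q ^+ j.2)
    <= q / (c * (q + sigma - 1)) * delta.
Proof.
move=> /andP [s0 s1] c0 /andP [q1 q2] thD uu.
have q0 : 0 < q by lra.
pose a := `|th i0 - th' i0| / c; pose r := (1 - sigma) / q.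
have cost_eq j : `|coupling_shift sigma th th' i0 j.1 j.2| / (c * q ^+ j.2)
    = if j.1 == i0 then a * r ^+ j.2 else 0.
  rewrite /coupling_shift; case: eqP => _; last by rewrite normr0 mul0r.
  rewrite normrM normrX (@ger0_norm _ (1 - sigma)); last by lra.
  by rewrite /a /r expr_div_n; field; rewrite expf_neq0 ?gt_eqF.
under eq_bigr do rewrite cost_eq.
rewrite -big_mkcond -big_filter -(big_map snd xpredT (fun t => a * r ^+ t)).
apply: (@le_trans _ _ (a / (1 - r))); first apply: sumr_geometric_uniq_le.
- by rewrite divr_ge0 // ltW.
- by apply/andP; split; rewrite /r ?divr_gt0 ?ltr_pdivrMr //; lra.
- rewrite map_inj_in_uniq ?filter_uniq // => -[i t] [i' t'].
  by rewrite !mem_filter /= => /andP [/eqP -> _] /andP [/eqP -> _] ->.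
have -> : a / (1 - r) = q / (c * (q + sigma - 1)) * `|th i0 - th' i0|.
  by rewrite /a /r; field; rewrite !gt_eqF //; lra.
by rewrite ler_wpM2l // divr_ge0 ?mulr_ge0 ?ltW //; lra.
Qed.

Section observation_measurability.
Context {R : realType} {N : nat} (sigma : R) (th : 'I_N -> R).
Local Notation noise_space := (g_sigma_algebraType (@cylinders _ R ('I_N * nat)%type)).
Local Notation obs_space := (g_sigma_algebraType (@obs_cylinders R N)).

Lemma measurable_coord (j : 'I_N * nat) :
  measurable_fun [set: noise_space] (fun f : noise_space => f j).
Proof.
move=> _ B mB; rewrite setTI; apply: sub_sigma_algebra.
exists [:: j], (fun _ => B); split => //.
apply/seteqP; split => f /=; first by move=> Bf k; rewrite mem_seq1 => /eqP ->.
by move=> /(_ j); rewrite mem_seq1 eqxx; apply.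
Qed.

Lemma measurable_client_state t i : measurable_fun [set: noise_space]
  (fun f : noise_space => client_state sigma th (fun i t => f (i, t)) t i).
Proof.
elim: t i => [|t IH] i /=; first exact: measurable_cst.
apply: measurable_funD; first exact: measurable_funM.
do 2 apply: measurable_funM => //; apply: measurable_sum => j.
exact: measurable_funD (IH j) (measurable_coord (j, t)).
Qed.

Lemma measurable_client_msg t i : measurable_fun [set: noise_space]
  (fun f : noise_space => client_msg sigma th (fun i t => f (i, t)) t i).
Proof. exact: measurable_funD (measurable_client_state t i) (measurable_coord (i, t)). Qed.

Lemma measurable_server_state t : measurable_fun [set: noise_space]
  (fun f : noise_space => server_state sigma th (fun i t => f (i, t)) t).
Proof.
apply: measurable_funM => //; apply: measurable_sum => i.
exact: measurable_client_msg.
Qed.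

Lemma measurable_observation : measurable_fun [set: noise_space]
  (fun f : noise_space =>
     observation sigma th (fun i t => f (i, t)) : obs_space).
Proof.
apply: (@measurability _ _ _ obs_space setT _ (@obs_cylinders R N)) => //.
move=> _ [_ [t [B [mB [[i ->]|->]]]] <-].
  have := measurable_client_msg t i measurableT _ mB.
  by congr measurable; apply/seteqP; split => f /=; rewrite in_setE.
have := measurable_server_state t measurableT _ mB.
by congr measurable; apply/seteqP; split => f /=; rewrite in_setE.
Qed.

End observation_measurability.

Theorem mainTheorem1 (R : realType) (d : measure_display)
  (T : measurableType d) (P : probability T R)
  (N : nat) (sigma c q : R)
  (eta : 'I_N -> nat -> T -> R) :
  (0 < N)%N ->
  0 < sigma < 1 -> 0 < c -> 1 - sigma < q < 1 ->
  (forall i t, measurable_fun setT (eta i t)) ->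
  mutually_independent P (fun it : 'I_N * nat => eta it.1 it.2) ->
  (forall i t, has_laplace_law P (c * q ^+ t) (eta i t)) ->
  forall (delta : R) (th th' : 'I_N -> R)
         (Obs : set (nat -> ('I_N -> R) * R)),
    0 <= delta ->
    delta_adjacent delta th th' ->
    obs_measurable Obs ->
    (P [set w | observation sigma th (fun i t => eta i t w) \in Obs] <=
     (expR (q / (c * (q + sigma - 1)) * delta))%:E *
     P [set w | observation sigma th' (fun i t => eta i t w) \in Obs])%E.
Proof.
(* [0 < N] and [0 <= delta] follow from adjacency, which supplies [i0]. *)
move=> _ sigma01 c0 q_range meta indep lap delta th th' Obs _ [i0 [thD th_eq]] mObs.
have q0 : 0 < q by case/andP: sigma01 => ? ?; case/andP: q_range => ? ?; lra.
pose A := (fun f : 'I_N * nat -> R =>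
  observation sigma th' (fun i t => f (i, t))) @^-1` Obs.
have mA : <<s cylinders >> A by rewrite -[A]setTI; exact: measurable_observation.
pose shift j := coupling_shift sigma th th' i0 j.1 j.2.
have cost_le (u : seq ('I_N * nat)) : uniq u ->
    expR (\sum_(j <- u) `|shift j| / (c * q ^+ j.2)) <=
    expR (q / (c * (q + sigma - 1)) * delta).
  by move=> uu; rewrite ler_expR; exact: coupling_cost_le.
have [_ _ dominated] := @sigma_shift_dominated _ _ _ P _ (fun j => eta j.1 j.2)
  (fun j => c * q ^+ j.2) shift _ (fun j => mulr_gt0 c0 (exprn_gt0 _ q0))
  (fun j => meta j.1 j.2) indep (fun j => lap j.1 j.2) cost_le (i0, 0%N) A mA.
have -> : [set w | observation sigma th (fun i t => eta i t w) \in Obs] =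
    shifted_noise_event (fun j => eta j.1 j.2) shift A.
  by apply/seteqP; split => w;
    rewrite /= inE (observation_coupling sigma th th' i0 th_eq).
have -> : [set w | observation sigma th' (fun i t => eta i t w) \in Obs] =
    noise_event (fun j => eta j.1 j.2) A.
  by apply/seteqP; split => w; rewrite /= inE.
exact: dominated.
Qed.
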